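(* Let $p$ be a prime, $d \geq 1$, $V = \mathbb{F}_p^d$, let $G \leq \mathrm{GL}(V)$ be an irreducible linear group on $V$, and let $\Delta \subseteq V$ be a $G$-invariant subset. If for some integer $m \geq 1$ the sumset $m \cdot \Delta$ contains a line $b + \mathbb{F}_p v = \{ b + \lambda v \mid \lambda \in \mathbb{F}_p\}$ for some $b \in V$ and nonzero $v \in V$, then $dm \cdot \Delta = V$.
   Context: For a subset $\Delta \subseteq V$ and a positive integer $n$, $n \cdot \Delta$ denotes the $n$-fold sumset $\{\delta_1 + \dots + \delta_n \mid \delta_1, \dots, \delta_n \in \Delta\}$. *)

From HB Require Import structures.
From mathcomp Require Import all_boot all_order all_algebra all_fingroup all_solvable all_field all_character.
Set Implicit Arguments. Unset Strict Implicit. Unset Printing Implicit Defensive.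
Import GRing.Theory.
Local Open Scope ring_scope.

Fixpoint sumset (V : finZmodType) (n : nat) (D : {set V}) : {set V} :=
  match n with
  | 0 => [set 0]
  | n'.+1 => [set x + y | x in D, y in sumset n' D]
  end.

Definition line (F : finFieldType) (d : nat) (b v : 'rV[F]_d) : {set 'rV[F]_d} :=
  [set b + lam *: v | lam : F].

From HB Require Import structures.
From mathcomp Require Import all_boot all_order all_algebra all_fingroup all_solvable all_field all_character.
Set Implicit Arguments. Unset Strict Implicit. Unset Printing Implicit Defensive.
Import GRing.Theory.
Local Open Scope ring_scope.

(* Grow an affine subspace c + W inside the sumsets one dimension at a time:
   by irreducibility, some G-translate g v of the direction of the given line
   lies outside W, and adding the translated line (b + F v) g, which lies in
   m . Delta by G-invariance, to c + W yields an affine subspace of dimension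
   one more inside (k + 1) m . Delta.  After d steps it is all of V. *)

Lemma sumsetD (V : finZmodType) (D : {set V}) k l x y :
  x \in sumset k D -> y \in sumset l D -> x + y \in sumset (k + l) D.
Proof.
elim: k x => [|k IHk] x /=.
  by rewrite inE => /eqP -> yl; rewrite add0r.
case/imset2P => x1 x2 x1D x2k -> yl; rewrite -addrA.
by apply/imset2P; exists x1 (x2 + y) => //; apply: IHk.
Qed.

Lemma sumset_additive_stable (V : finZmodType) (f : {additive V -> V})
    (D : {set V}) n :
  {in D, forall x, f x \in D} -> {in sumset n D, forall x, f x \in sumset n D}.
Proof.
move=> fD; elim: n => [|n IHn] x /=.
  by rewrite !inE => /eqP ->; rewrite raddf0.
case/imset2P => x1 x2 x1D x2n ->; rewrite raddfD.
by apply/imset2P; exists (f x1) (f x2); rewrite ?fD ?IHn.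
Qed.

Lemma line_mulmx_sub (F : finFieldType) n (b u : 'rV[F]_n) (A : 'M_n)
    (S : {set 'rV_n}) :
  line b u \subset S -> {in S, forall x, x *m A \in S} ->
  line (b *m A) (u *m A) \subset S.
Proof.
move=> /subsetP lineS AS; apply/subsetP => _ /imsetP[lam _ ->].
rewrite scalemxAl -mulmxDl; apply: AS; apply: lineS.
by apply/imsetP; exists lam.
Qed.

Lemma sumset_coset_addsmx (F : finFieldType) n (D : {set 'rV[F]_n}) k l
    (b u c : 'rV_n) m' (W : 'M_(m', n)) :
  line b u \subset sumset l D ->
  (forall w, (w <= W)%MS -> c + w \in sumset k D) ->
  forall w, (w <= W + u)%MS -> b + c + w \in sumset (l + k) D.
Proof.
move=> /subsetP lineS cWS _ /sub_addsmxP[[x y] /= ->].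
rewrite [y]mx11_scalar mul_scalar_mx [_ + _ *: u]addrC addrACA.
apply: sumsetD; first by apply: lineS; apply/imsetP; exists (y 0 0).
by apply: cWS; apply: submxMl.
Qed.

Lemma mxrank_adds_row_notsub (F : fieldType) m' n (W : 'M[F]_(m', n))
    (u : 'rV_n) :
  ~~ (u <= W)%MS -> \rank (W + u)%MS = (\rank W).+1.
Proof.
move=> uW; apply/eqP; rewrite eqn_leq; apply/andP; split.
  apply: leq_trans (mxrank_adds_leqif W u).1 _.
  by rewrite -[(\rank W).+1]addn1 leq_add2l rank_leq_row.
apply: rank_ltmx; rewrite ltmxE addsmxSl /=.
by apply: contra uW; apply: submx_trans (addsmxSr _ _).
Qed.

Section OrbitSpan.

Variables (F : fieldType) (gT : finGroupType) (G : {group gT}) (n : nat).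
Variable rG : mx_representation F G n.

Definition orbit_mx (u : 'rV[F]_n) := (\sum_(g in G) <<u *m rG g>>)%MS.

Lemma orbit_mx_id u : (u <= orbit_mx u)%MS.
Proof. by apply: (sumsmx_sup 1%g) => //; rewrite repr_mx1 mulmx1 genmxE. Qed.

Lemma orbit_mx_module u : mxmodule rG (orbit_mx u).
Proof.
apply/mxmoduleP => x Gx; rewrite sumsmxMr; apply/sumsmx_subP => g Gg.
rewrite (eqmxMr _ (genmxE _)) -mulmxA -repr_mxM //.
by apply: (sumsmx_sup (g * x)%g); rewrite ?groupM // genmxE.
Qed.

Lemma mx_irr_orbit_full u :
  mx_irreducible rG -> u != 0 -> row_full (orbit_mx u).
Proof.
move=> /mx_irrP[_ irrG] nz_u; apply: irrG; first exact: orbit_mx_module.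
by apply: contraNneq nz_u => u0; rewrite -submx0 -u0 orbit_mx_id.
Qed.

Lemma mx_irr_orbit_not_sub (u : 'rV[F]_n) m' (W : 'M_(m', n)) :
  mx_irreducible rG -> u != 0 -> (\rank W < n)%N ->
  exists2 g, g \in G & ~~ (u *m rG g <= W)%MS.
Proof.
move=> irrG nz_u ltWn; apply/exists_inP; apply: contraLR ltWn.
move=> /exists_inPn uGW; rewrite -leqNgt.
have uW : (orbit_mx u <= W)%MS.
  by apply/sumsmx_subP => g Gg; rewrite genmxE; apply/negPn/uGW.
have /eqP-> // : row_full W.
by rewrite -sub1mx (submx_trans _ uW) // sub1mx mx_irr_orbit_full.
Qed.

End OrbitSpan.

Section SumsetFill.

Variables (F : finFieldType) (gT : finGroupType) (G : {group gT}) (n : nat).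
Variables (rG : mx_representation F G n) (Delta : {set 'rV[F]_n}).
Hypothesis irrG : mx_irreducible rG.
Hypothesis Delta_stable :
  forall g, g \in G -> {in Delta, forall x, x *m rG g \in Delta}.
Variables (m : nat) (b v : 'rV[F]_n).
Hypothesis nz_v : v != 0.
Hypothesis line_sub : line b v \subset sumset m Delta.

Lemma sumset_mx_stable k g :
  g \in G -> {in sumset k Delta, forall x, x *m rG g \in sumset k Delta}.
Proof.
by move=> Gg; apply: (@sumset_additive_stable _ (mulmxr (rG g))); apply: Delta_stable.
Qed.

Lemma sumset_coset_rank k : (k <= n)%N ->
  exists c : 'rV_n, exists2 W : 'M_n,
    \rank W = k & forall w, (w <= W)%MS -> c + w \in sumset (k * m) Delta.
Proof.
elim: k => [|k IHk] lt_k_n.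
  exists 0, 0; rewrite ?mxrank0 // => w.
  by rewrite submx0 => /eqP->; rewrite addr0 inE.
have [c [W rankW cWS]] := IHk (ltnW lt_k_n).
have ltWn : (\rank W < n)%N by rewrite rankW.
have [g Gg vgW] := mx_irr_orbit_not_sub irrG nz_v ltWn.
exists (b *m rG g + c); exists (W + v *m rG g)%MS.
  by rewrite mxrank_adds_row_notsub ?rankW.
rewrite mulSn; apply: sumset_coset_addsmx cWS.
exact: line_mulmx_sub line_sub (sumset_mx_stable Gg).
Qed.

Theorem sumset_mx_irr_full : sumset (n * m) Delta = [set: 'rV_n].
Proof.
have [c [W rankW cWS]] := sumset_coset_rank (leqnn n).
apply/setP => x; rewrite inE -(subrKC c x); apply: cWS.
by apply: submx_full; rewrite /row_full rankW.
Qed.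

End SumsetFill.

Theorem lemma2p1 (p : nat) (hp : prime p) (d : nat) (hd : (0 < d)%N)
  (gT : finGroupType) (G : {group gT}) (rG : mx_representation 'F_p G d)
  (hfaith : mx_faithful rG) (hirr : mx_irreducible rG)
  (Delta : {set 'rV['F_p]_d})
  (hinv : forall g, g \in G -> forall x, x \in Delta -> x *m rG g \in Delta)
  (m : nat) (hm : (0 < m)%N) (b v : 'rV['F_p]_d) (hv : v != 0)
  (hline : line b v \subset sumset m Delta) :
  sumset (d * m) Delta = [set: 'rV['F_p]_d].
Proof.
exact: (sumset_mx_irr_full hirr hinv hv hline).
Qed.
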